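(* Let $\mathbb{Q}=\mathbb{Q}_1\cup\mathbb{Q}_2$ be a partition of the rationals into two disjoint dense sets, and let $f(x)=0$ for $x\in\mathbb{R}\setminus\mathbb{Q}$, $f(x)=1$ for $x\in\mathbb{Q}_1$, $f(x)=2$ for $x\in\mathbb{Q}_2$. Then $f$ has the Baire property, but $f$ is not the pointwise limit of any sequence of Świątkowski functions. Consequently, the class of pointwise limits of sequences of Świątkowski functions is strictly smaller than the class of functions with the Baire property.
   Context: $\mathrm{C}(f)$ denotes the set of continuity points of $f$. $f$ is a Świątkowski function if for all $a<b$ with $f(a)\ne f(b)$ there is $x\in(a,b)\cap\mathrm{C}(f)$ with $f(x)$ strictly between $f(a)$ and $f(b)$. A function has the Baire property if preimages of open sets are of the form $O\triangle M$ with $O$ open and $M$ meager. *)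

From Stdlib Require Import Reals Rtopology QArith.
Open Scope R_scope.

Definition is_rational (x : R) : Prop := exists q : Q, x = Q2R q.

Definition strictly_between (y a b : R) : Prop :=
  (a < y < b) \/ (b < y < a).

Definition swiatkowski (f : R -> R) : Prop :=
  forall a b : R, a < b -> f a <> f b ->
    exists x : R, a < x < b /\ continuity_pt f x /\ strictly_between (f x) (f a) (f b).

Definition nowhere_dense (A : R -> Prop) : Prop :=
  forall x : R, ~ interior (adherence A) x.

Definition meager (M : R -> Prop) : Prop :=
  exists N : nat -> R -> Prop,
    (forall n, nowhere_dense (N n)) /\ (forall x, M x -> exists n, N n x).

Definition has_Baire_property (f : R -> R) : Prop :=
  forall U : R -> Prop, open_set U ->
    exists O M : R -> Prop, open_set O /\ meager M /\
      forall x, U (f x) <-> ((O x /\ ~ M x) \/ (M x /\ ~ O x)).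

Definition limit_of_swiatkowski (g : R -> R) : Prop :=
  exists fn : nat -> R -> R,
    (forall n, swiatkowski (fn n)) /\ (forall x, Un_cv (fun n => fn n x) (g x)).

From Stdlib Require Import Reals Rtopology QArith Lra Lia Classical ClassicalEpsilon Cantor.
Open Scope R_scope.

(* A Świątkowski function has dense continuity points, so for each n the points where it
   oscillates by at least 1/(n+1) form a nowhere dense set: it is continuous off a meager set,
   and the preimage of an open set agrees with its interior off that set. Baire sets form a
   σ-algebra, and for a pointwise limit g of such functions U(g x) holds iff from some m on
   every f_(m+j) x stays 1/(k+1) inside U, a countable combination of preimages of closed sets;
   so the limit has the Baire property. The function f is constant off the meager set of
   rationals, so it has the Baire property as well.

   If Świątkowski functions f_n converged to f, then in every interval a late f_n takes a value
   near 1 (at a point of Q1) and a different value near 2 (at a point of Q2), hence has a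
   continuity point where it exceeds 1/2, hence exceeds 1/2 on a whole subinterval. Nesting
   such intervals while skipping the k-th rational at stage k yields an irrational x with
   f_n x > 1/2 for arbitrarily large n, although f_n x -> f x = 0. *)

(** * Topology of the line *)

Lemma neighbourhood_iff (V : R -> Prop) x :
  neighbourhood V x <-> exists r, 0 < r /\ forall y, Rabs (y - x) < r -> V y.
Proof.
  split.
  - intros [r Hr]. exists r. split; [apply cond_pos|]. intros y Hy; apply Hr, Hy.
  - intros [r [Hr H]]. exists (mkposreal r Hr). intros y Hy; apply H, Hy.
Qed.

Lemma continuity_pt_eps f x : continuity_pt f x <-> forall eps, 0 < eps ->
  exists d, 0 < d /\ forall y, Rabs (y - x) < d -> Rabs (f y - f x) < eps.
Proof.
  unfold continuity_pt, continue_in, limit1_in, limit_in, D_x, no_cond; simpl; unfold R_dist.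
  split.
  - intros H eps Heps. destruct (H eps Heps) as [d [Hd Hf]]. exists d; split; auto.
    intros y Hy. destruct (Req_dec y x) as [->|Hne].
    + rewrite Rminus_diag, Rabs_R0; auto.
    + apply Hf; split; auto.
  - intros H eps Heps. destruct (H eps Heps) as [d [Hd Hf]]. exists d. split; auto.
    intros y [_ Hy]; auto.
Qed.

Lemma exists_ball_in_interval a b x r : a < x < b -> 0 < r ->
  exists s, 0 < s /\ s <= r /\ a < x - s /\ x + s < b.
Proof.
  intros Hx Hr. exists (Rmin r (Rmin ((x - a) / 2) ((b - x) / 2))).
  pose proof (Rmin_l r (Rmin ((x - a) / 2) ((b - x) / 2))).
  pose proof (Rmin_r r (Rmin ((x - a) / 2) ((b - x) / 2))).
  pose proof (Rmin_l ((x - a) / 2) ((b - x) / 2)).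
  pose proof (Rmin_r ((x - a) / 2) ((b - x) / 2)).
  repeat split; try lra.
  apply Rmin_glb_lt; [lra | apply Rmin_glb_lt; lra].
Qed.

Lemma inv_INR_succ_pos n : 0 < / INR (S n).
Proof. apply Rinv_0_lt_compat, lt_0_INR. lia. Qed.

Lemma exists_inv_INR_succ_lt eps : 0 < eps -> exists n, / INR (S n) < eps.
Proof. intros Heps. destruct (archimed_cor1 eps Heps) as [[|n] [Hn Hpos]]; [lia | eauto]. Qed.

Lemma nested_intervals (a b : nat -> R) :
  Un_growing a -> Un_decreasing b -> (forall k, a k <= b k) ->
  exists x, forall k, a k <= x <= b k.
Proof.
  intros Ha Hb Hab.
  assert (Hcross : forall j k, a j <= b k).
  { intros j k.
    pose proof (growing_prop a (Nat.max j k) j Ha ltac:(lia)).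
    pose proof (decreasing_prop b k (Nat.max j k) Hb ltac:(lia)).
    specialize (Hab (Nat.max j k)). lra. }
  destruct (completeness (fun y => exists j, y = a j)) as [x [Hub Hlub]].
  - exists (b O). intros y [j ->]. apply Hcross.
  - exists (a O); eauto.
  - exists x. intros k. split.
    + apply Hub; eauto.
    + apply Hlub. intros y [j ->]. apply Hcross.
Qed.

Lemma nested_intervals_choice (P : nat -> R -> R -> Prop) a0 b0 : a0 < b0 ->
  (forall k a b, a < b -> exists a' b', a <= a' /\ a' < b' /\ b' <= b /\ P k a' b') ->
  exists x, forall k, exists a b, a <= x <= b /\ P k a b.
Proof.
  intros H0 Hstep.
  destruct (choice (fun (kI : nat * (R * R)) (I' : R * R) =>
      fst (snd kI) < snd (snd kI) ->
      fst (snd kI) <= fst I' /\ fst I' < snd I' /\ snd I' <= snd (snd kI) /\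
      P (fst kI) (fst I') (snd I'))) as [next Hnext].
  { intros [k [a b]]. destruct (Rlt_dec a b) as [Hab|Hab].
    - destruct (Hstep k a b Hab) as (a' & b' & H). exists (a', b'); auto.
    - exists (a, b). simpl. intros; contradiction. }
  pose (I := nat_rect (fun _ => (R * R)%type) (a0, b0) (fun k I => next (k, I))).
  assert (HI : forall k, fst (I k) < snd (I k)).
  { induction k as [|k IH]; [exact H0|]. apply (Hnext (k, I k) IH). }
  destruct (nested_intervals (fun k => fst (I k)) (fun k => snd (I k))) as [x Hx].
  - intros k. apply (Hnext (k, I k) (HI k)).
  - intros k. apply (Hnext (k, I k) (HI k)).
  - intros k. apply Rlt_le, HI.
  - exists x. intros k. exists (fst (I (S k))), (snd (I (S k))).
    split; [apply Hx | apply (Hnext (k, I k) (HI k))].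
Qed.

(** * Nowhere dense and meager sets *)

Lemma nowhere_dense_intro (A : R -> Prop) :
  (forall a b, a < b ->
     exists c d, a <= c /\ c < d /\ d <= b /\ forall y, c < y < d -> ~ A y) ->
  nowhere_dense A.
Proof.
  intros H x Hint. destruct (proj1 (neighbourhood_iff _ x) Hint) as [r [Hr Hcl]].
  destruct (H (x - r) (x + r)) as (c & d & Hc & Hcd & Hd & Hgap); [lra|].
  set (m := (c + d) / 2).
  assert (Hpos : 0 < (d - c) / 2) by lra.
  destruct (Hcl m ltac:(apply Rabs_def1; unfold m; lra) (disc m (mkposreal _ Hpos)))
    as [y [Hy HAy]].
  { exists (mkposreal _ Hpos). intros z Hz; exact Hz. }
  unfold disc in Hy; simpl in Hy. apply Rabs_def2 in Hy.
  apply (Hgap y); [unfold m in Hy; lra | exact HAy].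
Qed.

Lemma nowhere_dense_singleton z : nowhere_dense (fun x => x = z).
Proof.
  apply nowhere_dense_intro. intros a b Hab.
  destruct (Rlt_or_le z ((a + b) / 2)).
  - exists ((a + b) / 2), b. repeat split; try lra. intros y Hy ->. lra.
  - exists a, ((a + b) / 2). repeat split; try lra. intros y Hy ->. lra.
Qed.

Lemma nowhere_dense_boundary_compl O : open_set O ->
  nowhere_dense (fun x => ~ O x /\ ~ interior (complementary O) x).
Proof.
  intros HO. apply nowhere_dense_intro. intros a b Hab.
  destruct (classic (exists y, a < y < b /\ O y)) as [[y [Hy HOy]]|Hnone].
  - destruct (proj1 (neighbourhood_iff O y) (HO y HOy)) as [r [Hr Hball]].
    destruct (exists_ball_in_interval a b y r Hy Hr) as (s & Hs & Hsr & Ha & Hb).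
    exists (y - s), (y + s). repeat split; try lra.
    intros z Hz [HnO _]. apply HnO, Hball, Rabs_def1; lra.
  - exists a, b. repeat split; try lra. intros y Hy [_ Hnint]. apply Hnint.
    apply neighbourhood_iff.
    destruct (exists_ball_in_interval a b y 1 Hy Rlt_0_1) as (s & Hs & _ & Ha & Hb).
    exists s. split; [exact Hs|]. intros z Hz HOz. apply Rabs_def2 in Hz.
    apply Hnone. exists z. split; [lra | exact HOz].
Qed.

Lemma meager_sub (A B : R -> Prop) : meager B -> (forall x, A x -> B x) -> meager A.
Proof. intros [N [HN HB]] HAB. exists N. split; auto. Qed.

Lemma nowhere_dense_meager A : nowhere_dense A -> meager A.
Proof. intros HA. exists (fun _ => A). split; [auto | intros x Hx; exists 0%nat; exact Hx]. Qed.

Lemma meager_Union (M : nat -> R -> Prop) :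
  (forall k, meager (M k)) -> meager (fun x => exists k, M k x).
Proof.
  intros HM. destruct (choice _ HM) as [N HN].
  exists (fun m => let (k, n) := Cantor.of_nat m in N k n). split.
  - intros m. destruct (Cantor.of_nat m) as [k n]. apply HN.
  - intros x [k Hk]. destruct (proj2 (HN k) x Hk) as [n Hn].
    exists (Cantor.to_nat (k, n)). rewrite Cantor.cancel_of_to. exact Hn.
Qed.

Lemma meager_union (A B : R -> Prop) :
  meager A -> meager B -> meager (fun x => A x \/ B x).
Proof.
  intros HA HB.
  apply meager_sub with (fun x => exists k, (match k with O => A | _ => B end) x).
  - apply meager_Union. intros [|k]; assumption.
  - intros x [Hx|Hx]; [exists 0%nat | exists 1%nat]; exact Hx.
Qed.

Definition enumQ (n : nat) : Q :=
  let (m, p) := Cantor.of_nat n in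
  let (c, d) := Cantor.of_nat m in
  Qmake (Z.of_nat c - Z.of_nat d) (Pos.of_nat p).

Lemma enumQ_surj q : exists n, enumQ n = q.
Proof.
  destruct q as [z p].
  exists (Cantor.to_nat (Cantor.to_nat (Z.to_nat z, Z.to_nat (- z)), Pos.to_nat p)).
  unfold enumQ. rewrite !Cantor.cancel_of_to, Pos2Nat.id. f_equal. lia.
Qed.

Lemma is_rational_enumQ x : is_rational x -> exists n, x = Q2R (enumQ n).
Proof. intros [q ->]. destruct (enumQ_surj q) as [n <-]. eauto. Qed.

Lemma meager_rationals : meager is_rational.
Proof.
  exists (fun n x => x = Q2R (enumQ n)). split.
  - intros n. apply nowhere_dense_singleton.
  - apply is_rational_enumQ.
Qed.

(** * Baire sets and Baire measurable functions *)

Definition baire_set (A : R -> Prop) : Prop :=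
  exists O M, open_set O /\ meager M /\ forall x, ~ M x -> (A x <-> O x).

Definition baire_measurable (f : R -> R) : Prop :=
  forall U, open_set U -> baire_set (fun x => U (f x)).

Lemma baire_measurable_has_Baire_property f :
  baire_measurable f -> has_Baire_property f.
Proof.
  intros Hf U HU. destruct (Hf U HU) as (O & M & HO & HM & Hoff).
  exists O, (fun x => M x /\ ~ (U (f x) <-> O x)). split; [exact HO|]. split.
  - apply meager_sub with M; [exact HM | tauto].
  - intros x. specialize (Hoff x).
    destruct (classic (M x)), (classic (U (f x))), (classic (O x)); tauto.
Qed.

Lemma baire_set_ext (A B : R -> Prop) :
  (forall x, A x <-> B x) -> baire_set A -> baire_set B.
Proof.
  intros HAB (O & M & HO & HM & Hoff). exists O, M. repeat split; auto.
  - intros HBx. apply Hoff, HAB; auto.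
  - intros HOx. apply HAB, Hoff; auto.
Qed.

Lemma baire_set_compl A : baire_set A -> baire_set (fun x => ~ A x).
Proof.
  intros (V & M & HV & HM & Hoff).
  exists (interior (complementary V)),
    (fun x => M x \/ (~ V x /\ ~ interior (complementary V) x)).
  split; [apply interior_P3|]. split.
  - apply meager_union; [exact HM|].
    apply nowhere_dense_meager, nowhere_dense_boundary_compl, HV.
  - intros x Hx. apply not_or_and in Hx. destruct Hx as [HMx Hbd].
    rewrite (Hoff x HMx). split.
    + intros HVx. apply NNPP. intros Hint. apply Hbd; auto.
    + intros Hint. apply (interior_P1 _ x Hint).
Qed.

Lemma baire_set_Union (A : nat -> R -> Prop) :
  (forall n, baire_set (A n)) -> baire_set (fun x => exists n, A n x).
Proof.
  intros HA.
  destruct (choice (fun n (OM : (R -> Prop) * (R -> Prop)) =>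
      open_set (fst OM) /\ meager (snd OM) /\ forall x, ~ snd OM x -> (A n x <-> fst OM x)))
    as [OM HOM].
  { intros n. destruct (HA n) as (O & M & H). exists (O, M); exact H. }
  exists (fun x => exists n, fst (OM n) x), (fun x => exists n, snd (OM n) x). split; [|split].
  - intros x [n Hx]. destruct (proj1 (HOM n) x Hx) as [r Hr].
    exists r. intros y Hy. exists n. apply Hr, Hy.
  - apply meager_Union. intros n; apply HOM.
  - intros x Hx. split; intros [n Hn]; exists n;
      apply (proj2 (proj2 (HOM n)) x); eauto.
Qed.

Lemma baire_set_Inter (A : nat -> R -> Prop) :
  (forall n, baire_set (A n)) -> baire_set (fun x => forall n, A n x).
Proof.
  intros HA. apply baire_set_ext with (fun x => ~ exists n, ~ A n x).
  - intros x. split.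
    + intros H n. apply NNPP. intros Hn. apply H; eauto.
    + intros H [n Hn]. auto.
  - apply baire_set_compl, baire_set_Union. intros n; apply baire_set_compl, HA.
Qed.

Lemma baire_set_preimage_closed h F :
  baire_measurable h -> closed_set F -> baire_set (fun x => F (h x)).
Proof.
  intros Hh HF. apply baire_set_ext with (fun x => ~ complementary F (h x)).
  - intros x. unfold complementary. split; [apply NNPP | auto].
  - apply baire_set_compl, Hh, HF.
Qed.

Lemma baire_measurable_const_off_meager f M c :
  meager M -> (forall x, ~ M x -> f x = c) -> baire_measurable f.
Proof.
  intros HM Hc U HU. destruct (classic (U c)) as [HUc|HUc].
  - exists (fun _ => True), M. split; [apply open_set_P5|]. split; [exact HM|].
    intros x Hx. rewrite (Hc x Hx). tauto.
  - exists (fun _ => False), M. split; [apply open_set_P4|]. split; [exact HM|].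
    intros x Hx. rewrite (Hc x Hx). tauto.
Qed.

(** * Świątkowski functions and their limits *)

Lemma continuity_pt_interval g x eps a b :
  continuity_pt g x -> 0 < eps -> a < x < b ->
  exists a' b', a < a' < x /\ x < b' < b /\
    forall y, a' <= y <= b' -> Rabs (g y - g x) < eps.
Proof.
  intros Hg Heps Hx. destruct (proj1 (continuity_pt_eps g x) Hg eps Heps) as [d [Hd Hnear]].
  destruct (exists_ball_in_interval a b x (d / 2) Hx ltac:(lra)) as (s & Hs & Hsd & Ha & Hb).
  exists (x - s), (x + s). repeat split; try lra.
  intros y Hy. apply Hnear, Rabs_def1; lra.
Qed.

Lemma swiatkowski_continuity_point_dense g a b :
  swiatkowski g -> a < b -> exists c, a < c < b /\ continuity_pt g c.
Proof.
  intros Hg Hab.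
  destruct (classic (exists u v, a < u < v /\ v < b /\ g u <> g v))
    as [(u & v & Huv & Hvb & Hne)|Hconst].
  - destruct (Hg u v (proj2 Huv) Hne) as [c [Hc [Hcont _]]].
    exists c. split; [lra | exact Hcont].
  - set (m := (a + b) / 2). exists m. split; [unfold m; lra|].
    assert (Hm : forall y, a < y < b -> g y = g m).
    { intros y Hy. apply NNPP. intros Hne. apply Hconst.
      destruct (Rtotal_order y m) as [Hlt|[->|Hgt]].
      - exists y, m. unfold m in *. repeat split; lra || auto.
      - contradiction.
      - exists m, y. unfold m in *. repeat split; lra || auto. }
    apply continuity_pt_eps. intros eps Heps.
    destruct (exists_ball_in_interval a b m 1 ltac:(unfold m; lra) Rlt_0_1)
      as (s & Hs & _ & Ha & Hb).
    exists s. split; [exact Hs|]. intros y Hy. apply Rabs_def2 in Hy.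
    rewrite (Hm y ltac:(lra)), Rminus_diag, Rabs_R0. exact Heps.
Qed.

Definition oscillates (g : R -> R) (eps x : R) : Prop :=
  forall d, 0 < d -> exists y z, Rabs (y - x) < d /\ Rabs (z - x) < d /\ eps <= Rabs (g y - g z).

Lemma discontinuity_oscillates g x :
  ~ continuity_pt g x -> exists n, oscillates g (/ INR (S n)) x.
Proof.
  intros Hdisc. apply NNPP. intros Hosc. apply Hdisc, continuity_pt_eps. intros eps Heps.
  destruct (exists_inv_INR_succ_lt eps Heps) as [n Hn].
  apply NNPP. intros Hno. apply Hosc. exists n. intros d Hd.
  apply NNPP. intros Hyz. apply Hno. exists d. split; [exact Hd|]. intros y Hy.
  apply Rnot_le_lt. intros Hge. apply Hyz. exists y, x.
  rewrite Rminus_diag, Rabs_R0. repeat split; lra.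
Qed.

Lemma swiatkowski_oscillates_nowhere_dense g eps :
  swiatkowski g -> 0 < eps -> nowhere_dense (oscillates g eps).
Proof.
  intros Hg Heps. apply nowhere_dense_intro. intros a b Hab.
  destruct (swiatkowski_continuity_point_dense g a b Hg Hab) as [c [Hc Hcont]].
  destruct (continuity_pt_interval g c (eps / 2) a b Hcont ltac:(lra) Hc)
    as (a' & b' & Ha' & Hb' & Hclose).
  exists a', b'. repeat split; try lra. intros y Hy Hosc.
  destruct (Hosc (Rmin (y - a') (b' - y)) ltac:(apply Rmin_glb_lt; lra))
    as (z & w & Hz & Hw & Hgap).
  pose proof (Rmin_l (y - a') (b' - y)); pose proof (Rmin_r (y - a') (b' - y)).
  apply Rabs_def2 in Hz; apply Rabs_def2 in Hw.
  assert (Hzc : Rabs (g z - g c) < eps / 2) by (apply Hclose; lra).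
  assert (Hwc : Rabs (g w - g c) < eps / 2) by (apply Hclose; lra).
  apply Rabs_def2 in Hzc; apply Rabs_def2 in Hwc.
  assert (Rabs (g z - g w) < eps) by (apply Rabs_def1; lra). lra.
Qed.

Lemma swiatkowski_discontinuities_meager g :
  swiatkowski g -> meager (fun x => ~ continuity_pt g x).
Proof.
  intros Hg. exists (fun n => oscillates g (/ INR (S n))). split.
  - intros n. apply swiatkowski_oscillates_nowhere_dense; [exact Hg | apply inv_INR_succ_pos].
  - apply discontinuity_oscillates.
Qed.

Lemma swiatkowski_baire_measurable g : swiatkowski g -> baire_measurable g.
Proof.
  intros Hg V HV. exists (interior (fun x => V (g x))), (fun x => ~ continuity_pt g x).
  split; [apply interior_P3|]. split; [apply swiatkowski_discontinuities_meager, Hg|].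
  intros x Hx. apply NNPP in Hx. split.
  - intros HVx. destruct (proj1 (neighbourhood_iff V (g x)) (HV _ HVx)) as [r [Hr Hball]].
    destruct (proj1 (continuity_pt_eps g x) Hx r Hr) as [d [Hd Hnear]].
    apply neighbourhood_iff. exists d. split; [exact Hd|]. intros y Hy. apply Hball, Hnear, Hy.
  - apply (interior_P1 (fun x => V (g x))).
Qed.

Definition ball_inside (U : R -> Prop) (r y : R) : Prop :=
  forall z, Rabs (z - y) < r -> U z.

Lemma closed_set_ball_inside U r : closed_set (ball_inside U r).
Proof.
  intros y Hy. apply not_all_ex_not in Hy. destruct Hy as [z Hz].
  apply imply_to_and in Hz. destruct Hz as [Hzy HUz].
  apply neighbourhood_iff. exists (r - Rabs (z - y)). split; [lra|].
  intros y' Hy' Hin. apply HUz, Hin.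
  assert (Rabs (z - y') <= Rabs (z - y) + Rabs (y - y')).
  { replace (z - y') with ((z - y) + (y - y')) by ring. apply Rabs_triang. }
  rewrite (Rabs_minus_sym y y') in H. lra.
Qed.

Lemma Un_cv_open_iff (u : nat -> R) l U : open_set U -> Un_cv u l ->
  (U l <-> exists k m, forall j, ball_inside U (/ INR (S k)) (u (m + j)%nat)).
Proof.
  intros HU Hu. split.
  - intros HUl. destruct (proj1 (neighbourhood_iff U l) (HU l HUl)) as [r [Hr Hball]].
    destruct (exists_inv_INR_succ_lt (r / 2)) as [k Hk]; [lra|].
    destruct (Hu (r / 2)) as [m Hm]; [lra|].
    exists k, m. intros j z Hz. apply Hball.
    assert (Hum : R_dist (u (m + j)%nat) l < r / 2) by (apply Hm; lia).
    unfold R_dist in Hum. apply Rabs_def2 in Hum. apply Rabs_def2 in Hz. apply Rabs_def1; lra.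
  - intros (k & m & Hin). destruct (Hu (/ INR (S k)) (inv_INR_succ_pos k)) as [N HN].
    apply (Hin N). rewrite Rabs_minus_sym. apply HN. lia.
Qed.

Lemma baire_measurable_limit (fn : nat -> R -> R) g :
  (forall n, baire_measurable (fn n)) -> (forall x, Un_cv (fun n => fn n x) (g x)) ->
  baire_measurable g.
Proof.
  intros Hfn Hcv U HU.
  apply baire_set_ext with
    (fun x => exists k m, forall j, ball_inside U (/ INR (S k)) (fn (m + j)%nat x)).
  { intros x. symmetry. apply (Un_cv_open_iff (fun n => fn n x)); [exact HU | apply Hcv]. }
  apply baire_set_Union. intros k. apply baire_set_Union. intros m.
  apply baire_set_Inter. intros j.
  apply baire_set_preimage_closed; [apply Hfn | apply closed_set_ball_inside].
Qed.

Lemma limit_of_swiatkowski_has_Baire_property g :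
  limit_of_swiatkowski g -> has_Baire_property g.
Proof.
  intros [fn [Hswi Hcv]]. apply baire_measurable_has_Baire_property.
  apply (baire_measurable_limit fn); [|exact Hcv].
  intros n. apply swiatkowski_baire_measurable, Hswi.
Qed.

(** * The function is not a limit of Świątkowski functions *)

Lemma swiatkowski_continuity_point_above g a b u v c :
  swiatkowski g -> a < u < b -> a < v < b -> c < g u -> c < g v -> g u <> g v ->
  exists x, a < x < b /\ continuity_pt g x /\ c < g x.
Proof.
  intros Hg Hu Hv Hcu Hcv Hne.
  destruct (Rtotal_order u v) as [Huv|[<-|Hvu]]; [| contradiction |].
  - destruct (Hg u v Huv Hne) as (x & Hx & Hcont & Hbetween).
    exists x. split; [lra|]. split; [exact Hcont|]. destruct Hbetween; lra.
  - destruct (Hg v u Hvu (not_eq_sym Hne)) as (x & Hx & Hcont & Hbetween).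
    exists x. split; [lra|]. split; [exact Hcont|]. destruct Hbetween; lra.
Qed.

Section NotALimitOfSwiatkowski.

Variables (Q1 Q2 : R -> Prop) (f : R -> R) (fn : nat -> R -> R).
Hypotheses
  (hdense1 : forall a b, a < b -> exists q, Q1 q /\ a < q < b)
  (hdense2 : forall a b, a < b -> exists q, Q2 q /\ a < q < b)
  (hf0 : forall x, ~ is_rational x -> f x = 0)
  (hf1 : forall x, Q1 x -> f x = 1)
  (hf2 : forall x, Q2 x -> f x = 2)
  (hswi : forall n, swiatkowski (fn n))
  (hcv : forall x, Un_cv (fun n => fn n x) (f x)).

Lemma late_continuity_point_above_half a b N : a < b ->
  exists n x, (N <= n)%nat /\ a < x < b /\ continuity_pt (fn n) x /\ 1 / 2 < fn n x.
Proof.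
  intros Hab.
  destruct (hdense1 a b Hab) as [q1 [Hq1 Hq1ab]].
  destruct (hdense2 a b Hab) as [q2 [Hq2 Hq2ab]].
  destruct (hcv q1 (1 / 2)) as [N1 HN1]; [lra|].
  destruct (hcv q2 (1 / 2)) as [N2 HN2]; [lra|].
  set (n := Nat.max N (Nat.max N1 N2)).
  assert (H1 : R_dist (fn n q1) (f q1) < 1 / 2) by (apply HN1; unfold n; lia).
  assert (H2 : R_dist (fn n q2) (f q2) < 1 / 2) by (apply HN2; unfold n; lia).
  unfold R_dist in H1, H2. rewrite hf1 in H1 by exact Hq1. rewrite hf2 in H2 by exact Hq2.
  apply Rabs_def2 in H1; apply Rabs_def2 in H2.
  destruct (swiatkowski_continuity_point_above (fn n) a b q1 q2 (1 / 2) (hswi n))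
    as (x & Hx & Hcont & Hval); try lra.
  exists n, x. repeat split; try lra; [unfold n; lia | exact Hcont].
Qed.

Definition stage_interval (k : nat) (a b : R) : Prop :=
  ~ (a <= Q2R (enumQ k) <= b) /\
  exists n, (k <= n)%nat /\ forall y, a <= y <= b -> 1 / 2 < fn n y.

Lemma stage_subinterval k a b : a < b ->
  exists a' b', a <= a' /\ a' < b' /\ b' <= b /\ stage_interval k a' b'.
Proof.
  intros Hab. set (q := Q2R (enumQ k)).
  assert (Havoid : exists c d, a <= c /\ c < d /\ d <= b /\ (q <= c \/ d <= q)).
  { destruct (Rle_or_lt q ((a + b) / 2)).
    - exists ((a + b) / 2), b. repeat split; lra.
    - exists a, ((a + b) / 2). repeat split; lra. }
  destruct Havoid as (c & d & Hac & Hcd & Hdb & Hq).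
  destruct (late_continuity_point_above_half c d k Hcd) as (n & x & Hn & Hx & Hcont & Hval).
  destruct (continuity_pt_interval (fn n) x (fn n x - 1 / 2) c d Hcont ltac:(lra) Hx)
    as (a' & b' & Ha' & Hb' & Hclose).
  exists a', b'. split; [lra|]. split; [lra|]. split; [lra|]. split.
  { change (~ (a' <= q <= b')). lra. }
  exists n. split; [exact Hn|]. intros y Hy.
  specialize (Hclose y Hy). apply Rabs_def2 in Hclose. lra.
Qed.

Lemma not_limit_of_swiatkowski : False.
Proof.
  destruct (nested_intervals_choice stage_interval 0 1 Rlt_0_1 stage_subinterval) as [x Hx].
  assert (Hirr : ~ is_rational x).
  { intros Hrat. destruct (is_rational_enumQ x Hrat) as [k ->].
    destruct (Hx k) as (a & b & Hab & Hk & _). contradiction. }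
  destruct (hcv x (1 / 2)) as [M HM]; [lra|].
  destruct (Hx M) as (a & b & Hab & _ & n & Hn & Hval).
  assert (Hdist : R_dist (fn n x) (f x) < 1 / 2) by (apply HM; lia).
  unfold R_dist in Hdist. rewrite (hf0 x Hirr) in Hdist. apply Rabs_def2 in Hdist.
  specialize (Hval x Hab). lra.
Qed.

End NotALimitOfSwiatkowski.

Theorem mainTheorem8
  (Q1 Q2 : R -> Prop)
  (hpart : forall x, is_rational x <-> (Q1 x \/ Q2 x))
  (hdisj : forall x, ~ (Q1 x /\ Q2 x))
  (hdense1 : forall a b, a < b -> exists q, Q1 q /\ a < q < b)
  (hdense2 : forall a b, a < b -> exists q, Q2 q /\ a < q < b)
  (f : R -> R)
  (hf0 : forall x, ~ is_rational x -> f x = 0)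
  (hf1 : forall x, Q1 x -> f x = 1)
  (hf2 : forall x, Q2 x -> f x = 2) :
  has_Baire_property f /\ ~ limit_of_swiatkowski f /\
  (forall g, limit_of_swiatkowski g -> has_Baire_property g).
Proof.
  split; [|split].
  - apply baire_measurable_has_Baire_property.
    apply (baire_measurable_const_off_meager f is_rational 0 meager_rationals hf0).
  - intros [fn [Hswi Hcv]].
    exact (not_limit_of_swiatkowski Q1 Q2 f fn hdense1 hdense2 hf0 hf1 hf2 Hswi Hcv).
  - exact limit_of_swiatkowski_has_Baire_property.
Qed.
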